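(* Let $\mathbf A$ be a regular BBL transformation of bandwidth $(p,q)$, and let $z_1,\dots,z_n$ be the distinct nonzero roots of $\det A(w,w^{-1})$ with multiplicities $s_1,\dots,s_n$. Then the space of square-summable solutions of the half-infinite bulk equation is $$\mathcal M_{1,\infty}\cap\mathcal H=\mathcal F_1^-\oplus\mathbf P_{1,\infty}\bigoplus_{\ell:\,|z_\ell|<1}\big(\ker\mathbf A\cap\mathcal T_{z_\ell,s_\ell}\big).$$
   Context: Fix $d\ge1$, $e_m$ the standard basis of $\mathbb C^d$. $\mathcal V^S_d$: doubly infinite sequences $\Psi=\{\psi_j\}_{j\in\mathbb Z}$, $\psi_j\in\mathbb C^d$. A matrix Laurent polynomial of bandwidth $(p,q)$ is $A(w,w^{-1})=\sum_{r=p}^qa_rw^r$, integers $p\le q$, $a_r$ complex $d\times d$, $a_p\ne0\ne a_q$; its BBL transformation is $(\mathbf A\Psi)_j=\sum_ra_r\psi_{j+r}$; $\mathbf T$ is the left shift $(\mathbf T\Psi)_j=\psi_{j+1}$. $\mathbf A$ is regular if $\det(w^{-p}A(w,w^{-1}))$ is not the zero polynomial. $p'=\min(p,0)$, $q'=\max(0,q)$. $\mathcal V_{L,R}$ = sequences with $\psi_j=0$ for $j\notin[L,R]$, $\mathbf P_{L,R}$ zeroes entries outside $[L,R]$ ($L,R$ possibly infinite). $\mathcal M_{1,\infty}=\ker(\mathbf P_{1-p',\infty}\mathbf A|_{\mathcal V_{1,\infty}})$ (the solutions in $\mathcal V_{1,\infty}$ of the bulk equation of the infinite BBT transformation $\mathbf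 P_{1,\infty}\mathbf A|_{\mathcal V_{1,\infty}}$). $\mathcal F_1^-=\{\Psi\in\mathcal M_{1,\infty}:(\mathbf P_{1,\infty}\mathbf T)^k\Psi=0\text{ for some }k\ge1\}$. For $z\ne0$, $v\ge1$: $\Phi_{z,v}=\{j^{(v-1)}z^{j-v+1}\}_{j\in\mathbb Z}$ with $j^{(0)}=1$, $j^{(k)}=j(j-1)\cdots(j-k+1)$; $\mathcal T_{z,s}=\operatorname{Span}\{\Phi_{z,v}e_m:1\le v\le s,1\le m\le d\}$. $\mathcal H$ is the set of sequences in $\mathcal V_{1,\infty}$ with $\sum_{j\ge1}\|\psi_j\|^2<\infty$. *)

From HB Require Import structures.
From mathcomp Require Import all_boot all_order all_algebra.
Set Implicit Arguments. Unset Strict Implicit. Unset Printing Implicit Defensive.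
Import Order.TTheory GRing.Theory Num.Theory.
Local Open Scope ring_scope.

Definition vseq (C : archiClosedFieldType) (d : nat) := int -> 'cV[C]_d.

(* BBL transformation of the Laurent polynomial A(w,w^-1) = sum_{r=p}^q a_r w^r:
   (A Psi)_j = sum_{r=p}^q a_r psi_{j+r}  (p <= q assumed). *)
Definition bbl (C : archiClosedFieldType) (d : nat) (p q : int)
    (a : int -> 'M[C]_d) (psi : vseq C d) : vseq C d :=
  fun j => \sum_(k < (`|q - p|%N).+1) a (p + k%:Z) *m psi (j + (p + k%:Z)).

(* The matrix polynomial w^{-p} A(w,w^{-1}) = sum_{k=0}^{q-p} a_{p+k} w^k,
   and its determinant (a scalar polynomial in w). *)
Definition shifted_symbol_det (C : archiClosedFieldType) (d : nat) (p q : int)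
    (a : int -> 'M[C]_d) : {poly C} :=
  \det (\matrix_(i < d, l < d)
          \sum_(k < (`|q - p|%N).+1) (a (p + k%:Z) i l)%:P * 'X^k).

Definition regular (C : archiClosedFieldType) (d : nat) (p q : int)
    (a : int -> 'M[C]_d) : Prop :=
  shifted_symbol_det p q a != 0.

(* z (nonzero) is a root of det A(w,w^{-1}) = w^{dp} det(w^{-p}A(w,w^{-1})),
   with multiplicity s. *)
Definition nonzero_root_of_det (C : archiClosedFieldType) (d : nat) (p q : int)
    (a : int -> 'M[C]_d) (z : C) : Prop :=
  z != 0 /\ root (shifted_symbol_det p q a) z.

Definition root_mult (C : archiClosedFieldType) (d : nat) (p q : int)
    (a : int -> 'M[C]_d) (z : C) : nat :=
  mup z (shifted_symbol_det p q a).

(* Left shift T and truncation P_{L,R} (L,R possibly infinite: we need the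
   half-infinite versions P_{L,oo}). *)
Definition shiftT (C : archiClosedFieldType) (d : nat) (psi : vseq C d) : vseq C d :=
  fun j => psi (j + 1).

Definition projLinf (C : archiClosedFieldType) (d : nat) (L : int) (psi : vseq C d)
  : vseq C d := fun j => if L <= j then psi j else 0.

Definition in_V1inf (C : archiClosedFieldType) (d : nat) (psi : vseq C d) : Prop :=
  forall j : int, j < 1 -> psi j = 0.

Definition pprime (p : int) : int := Num.min p 0.

Definition M1inf (C : archiClosedFieldType) (d : nat) (p q : int)
    (a : int -> 'M[C]_d) (psi : vseq C d) : Prop :=
  in_V1inf psi /\ projLinf (1 - pprime p) (bbl p q a psi) = (fun _ => 0).

Definition F1minus (C : archiClosedFieldType) (d : nat) (p q : int)
    (a : int -> 'M[C]_d) (psi : vseq C d) : Prop :=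
  M1inf p q a psi /\
  exists k : nat, (1 <= k)%N /\
    iter k (fun phi => projLinf 1 (shiftT phi)) psi = (fun _ => 0).

Definition sqnorm (C : archiClosedFieldType) (d : nat) (v : 'cV[C]_d) : C :=
  \sum_(m < d) `|v m 0| ^+ 2.

(* H: sequences in V_{1,oo} with sum_{j>=1} ||psi_j||^2 < oo (nonnegative terms:
   finiteness of the series = boundedness of the partial sums). *)
Definition in_H (C : archiClosedFieldType) (d : nat) (psi : vseq C d) : Prop :=
  in_V1inf psi /\
  exists M : C, forall N : nat, \sum_(1 <= j < N.+1) sqnorm (psi j%:Z) <= M.

Definition falling (C : archiClosedFieldType) (j : int) (k : nat) : C :=
  \prod_(i < k) ((j - i%:Z)%:~R).

Definition Phi (C : archiClosedFieldType) (z : C) (v : nat) (j : int) : C :=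
  falling C j (v.-1) * z ^ (j - v%:Z + 1).

Definition in_T (C : archiClosedFieldType) (d : nat) (z : C) (s : nat)
    (psi : vseq C d) : Prop :=
  exists c : 'I_s -> 'I_d -> C,
    forall j : int,
      psi j = \sum_(v < s) \sum_(m < d) (c v m * Phi z v.+1 j) *: (delta_mx m 0 : 'cV[C]_d).

Definition in_kerA (C : archiClosedFieldType) (d : nat) (p q : int)
    (a : int -> 'M[C]_d) (psi : vseq C d) : Prop :=
  bbl p q a psi = (fun _ => 0).

(* Let D = det(w^{-p} A(w, w^{-1})) (a nonzero polynomial by regularity).
   1. Multiplying the bulk equation by the adjugate of the symbol shows that
      every solution psi satisfies the scalar difference equation D(T) psi = 0
      far to the right (bulk_det).
   2. Factor D over its roots.  Factors T - 0 only shift; factors T - y with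
      |y| >= 1 cannot kill a nonzero square-summable sequence; so a
      square-summable psi is eventually killed by prod_{0<|y|<1} (T - y)
      (l2_inner_factor), hence is eventually a sum of quasi-polynomials
      Phi_{z,v} c with |z| < 1 and degree the multiplicity of z
      (polyop_kernel_qpseq, l2_kernel_qpseq).
   3. Quasi-polynomials with distinct nonzero roots are linearly independent
      on every half-line (qpseq_indep).  This gives the two directness
      statements, and shows that the quasi-polynomial parts of a bulk
      solution lie in ker A (qpseq_parts_in_kernel); the remainder is finitely
      supported, i.e. lies in F_1^-.
   4. Conversely quasi-polynomials with |z| < 1 are square-summable
      (l2_qpseq), and P_{1,oo} maps ker A into bulk solutions. *)

From HB Require Import structures.
From mathcomp Require Import all_boot all_order all_algebra.
From mathcomp Require Import ring zify.
From Stdlib Require Import FunctionalExtensionality.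
Import Order.TTheory GRing.Theory Num.Theory.
Set Implicit Arguments. Unset Strict Implicit. Unset Printing Implicit Defensive.
Local Open Scope ring_scope.

Lemma list_choice (T : eqType) (A : Type) (a0 : A) (P : T -> A -> Prop) (s : seq T) :
  (forall x, x \in s -> exists a, P x a) -> exists f : T -> A, forall x, x \in s -> P x (f x).
Proof.
elim: s => [|x s IH] h; first by exists (fun _ => a0).
have [a ha] := h x (mem_head _ _).
have [f hf] := IH (fun y ys => h y (@mem_behead _ (x :: s) _ ys)).
exists (fun y => if y == x then a else f y) => y; rewrite inE.
by case: eqVneq => [->|_] //= /hf.
Qed.

Section QuasiPolynomials.
Variables (C : archiClosedFieldType) (V : lmodType C).

Lemma falling0 (j : int) : falling C j 0 = 1.
Proof. by rewrite /falling big_ord0. Qed.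

Lemma fallingS (j : int) k : falling C j k.+1 = falling C j k * (j - k%:Z)%:~R.
Proof. by rewrite /falling big_ord_recr. Qed.

Lemma falling_succ (j : int) k :
  falling C (j + 1) k.+1 = falling C j k.+1 + k.+1%:R * falling C j k.
Proof.
elim: k => [|k IH]; first by rewrite !fallingS !falling0 !mul1r !subr0 rmorphD /=; ring.
rewrite fallingS IH [falling C j k.+2]fallingS [falling C j k.+1]fallingS.
rewrite !rmorphB /= !rmorphD /= -!pmulrn -[k.+2%:R]natr1 -[k.+1%:R]natr1; ring.
Qed.

Lemma Phi1 (z : C) (j : int) : Phi z 1 j = z ^ j.
Proof. by rewrite /Phi falling0 mul1r; congr (_ ^ _); lia. Qed.

Lemma Phi_succ (z : C) v (j : int) : z != 0 ->
  Phi z v.+1 (j + 1) = z * Phi z v.+1 j + v%:R * Phi z v j.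
Proof.
move=> z0; have zexpS (e : int) : z ^ (e + 1) = z ^ e * z by rewrite expfzDr // expr1z.
rewrite /Phi; case: v => [|k] /=.
  rewrite !falling0 mul0r addr0 !mul1r.
  have -> : j + 1 - 1%:Z + 1 = (j - 1%:Z + 1) + 1 by lia.
  by rewrite zexpS mulrC.
rewrite falling_succ.
have -> : j + 1 - (k.+2)%:Z + 1 = j - k%:Z by lia.
have -> : j - (k.+2)%:Z + 1 = j - k%:Z - 1 by lia.
have -> : j - (k.+1)%:Z + 1 = j - k%:Z by lia.
have -> : z ^ (j - k%:Z) = z ^ (j - k%:Z - 1) * z by rewrite -zexpS subrK.
ring.
Qed.

(* Quasi-polynomial sequence j |-> sum_{v<s} Phi_{z,v+1}(j) c_v with
   coefficients c_v in V: the general element of T_{z,s} when V = C^d. *)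
Definition qpseq (z : C) (s : nat) (c : nat -> V) (j : int) : V :=
  \sum_(v < s) Phi z v.+1 j *: c v.

(* Coefficients of (T - z0) applied to qpseq z s c. *)
Definition qcoef_diff (z0 z : C) (s : nat) (c : nat -> V) : nat -> V :=
  fun v => (z - z0) *: c v + v.+1%:R *: (if (v.+1 < s)%N then c v.+1 else 0).

Lemma qpseq_ext z s (c c' : nat -> V) j :
  (forall v, (v < s)%N -> c v = c' v) -> qpseq z s c j = qpseq z s c' j.
Proof. by move=> h; apply: eq_bigr => v _; rewrite h. Qed.

Lemma qpseq0 z s (c : nat -> V) j : (forall v, (v < s)%N -> c v = 0) -> qpseq z s c j = 0.
Proof. by move=> h; rewrite /qpseq big1 // => v _; rewrite h // scaler0. Qed.

Lemma qpseq_top z s (c : nat -> V) j : c s = 0 -> qpseq z s.+1 c j = qpseq z s c j.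
Proof. by move=> h; rewrite /qpseq big_ord_recr /= h scaler0 addr0. Qed.

Lemma qpseqD z s (c c' : nat -> V) j :
  qpseq z s (fun v => c v + c' v) j = qpseq z s c j + qpseq z s c' j.
Proof. by rewrite /qpseq -big_split; apply: eq_bigr => v _; rewrite scalerDr. Qed.

Lemma qpseq_diff z0 z s (c : nat -> V) j : z != 0 ->
  qpseq z s c (j + 1) - z0 *: qpseq z s c j = qpseq z s (qcoef_diff z0 z s c) j.
Proof.
move=> z0n; rewrite /qpseq /qcoef_diff scaler_sumr -sumrB.
under eq_bigr => v _ do
  rewrite scalerA -scalerBl Phi_succ // addrAC -mulrBl scalerDl.
under [RHS]eq_bigr => v _ do rewrite scalerDr !scalerA.
rewrite !big_split /=; congr (_ + _).
  by apply: eq_bigr => v _; rewrite mulrC.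
case: s => [|s]; first by rewrite !big_ord0.
rewrite big_ord_recl big_ord_recr /= mul0r scale0r add0r ltnn scaler0 addr0.
by apply: eq_bigr => i _; rewrite /bump /= ltnS ltn_ord mulrC add1n.
Qed.

(* (T - z) lowers the degree of a quasi-polynomial with root z. *)
Lemma qcoef_diff_top z s (c : nat -> V) : qcoef_diff z z s.+1 c s = 0.
Proof. by rewrite /qcoef_diff subrr scale0r add0r ltnn scaler0. Qed.

Lemma triangular_zero (a : C) (w : nat -> C) s (c : nat -> V) : a != 0 ->
  (forall v, (v < s)%N -> a *: c v + w v *: (if (v.+1 < s)%N then c v.+1 else 0) = 0) ->
  forall v, (v < s)%N -> c v = 0.
Proof.
move=> a0 h.
suff H : forall k v, (s - k <= v)%N -> (v < s)%N -> c v = 0.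
  by move=> v vs; apply: (H s) => //; rewrite subnn.
elim=> [|k IH] v h1 h2; first by move: h1; rewrite subn0 leqNgt h2.
have [hv|hv] := leqP (s - k) v; first exact: IH.
have e : (if (v.+1 < s)%N then c v.+1 else 0) = 0.
  by case: ifP => // hv1; apply: IH => //; lia.
move: (h v h2); rewrite e scaler0 addr0 => /eqP.
by rewrite scaler_eq0 (negPf a0) => /eqP.
Qed.

(* One step of the independence argument below: if a sum of quasi-polynomials
   vanishes on [N, oo) and all coefficients of its image under T - z1 vanish
   (the top one at z1 is zero anyway), then all its coefficients vanish.  At
   z != z1 the coefficients solve a triangular system with diagonal z - z1;
   at z1 they are forced by v c_v = 0 and by the value of the sum at N. *)
Lemma qpseq_indep_step (zs : seq C) (z1 : C) (s : C -> nat) (c : C -> nat -> V) (N : int) :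
  uniq zs -> z1 \in zs -> z1 != 0 ->
  (forall j, N <= j -> \sum_(z <- zs) qpseq z (s z) (c z) j = 0) ->
  (forall z, z \in zs -> forall v, (v < s z - (z == z1))%N ->
     qcoef_diff z1 z (s z) (c z) v = 0) ->
  forall z, z \in zs -> forall v, (v < s z)%N -> c z v = 0.
Proof.
move=> uzs z1in z1n hN c'0.
have other_roots z : z \in zs -> z != z1 -> forall v, (v < s z)%N -> c z v = 0.
  move=> zin zn1; apply: (@triangular_zero (z - z1) (fun v => v.+1%:R)).
    by rewrite subr_eq0.
  by move=> v vs; apply: c'0; rewrite // (negPf zn1) subn0.
have higher_coefs v : (0 < v)%N -> (v < s z1)%N -> c z1 v = 0.
  case: v => [|v] // _ vs.
  have := c'0 z1 z1in v; rewrite eqxx /qcoef_diff subrr scale0r add0r vs.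
  by move=> /(_ ltac:(lia)) /eqP; rewrite scaler_eq0 pnatr_eq0 /= => /eqP.
move=> z zin v vs; have [ez|zn1] := eqVneq z z1; last exact: other_roots z zin zn1 v vs.
subst z; case: v vs => [|v] vs; last exact: higher_coefs.
have := hN N (lexx _); rewrite (bigD1_seq z1) //= big1_seq; last first.
  by move=> z /andP [zn1 zin2]; apply: qpseq0; exact: other_roots.
rewrite addr0 /qpseq; case E: (s z1) vs => [|m] // _.
rewrite big_ord_recl big1 => [|i _]; last by rewrite higher_coefs ?scaler0 // E ltn_ord.
rewrite addr0 Phi1 => /eqP; rewrite scaler_eq0 expfz_eq0 (negPf z1n) andbF /=.
by move/eqP.
Qed.

(* Quasi-polynomials with distinct nonzero roots are linearly independent,
   already as sequences restricted to a half-line [N, oo).  Induction on the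
   total degree: T - z1 maps the sum to one of lower total degree. *)
Lemma qpseq_indep (zs : seq C) : uniq zs -> (forall z, z \in zs -> z != 0) ->
  forall (s : C -> nat) (c : C -> nat -> V) (N : int),
  (forall j, N <= j -> \sum_(z <- zs) qpseq z (s z) (c z) j = 0) ->
  forall z, z \in zs -> forall v, (v < s z)%N -> c z v = 0.
Proof.
move=> uzs nz0 s0.
move: {2}(\sum_(z <- zs) s0 z)%N (leqnn (\sum_(z <- zs) s0 z)%N) => n.
elim: n s0 => [|n IH] s.
  move=> hs c N _ z zin v vs; exfalso.
  by move: hs; rewrite (bigD1_seq z) //=; lia.
move=> hs c N hN.
have [/hasP [z1 z1in sz1]|/hasPn hn] := boolP (has (fun z => 0 < s z)%N zs); last first.
  by move=> z /hn zin v vs; exfalso; lia.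
apply: (qpseq_indep_step uzs z1in (nz0 _ z1in) hN).
pose s' z := (s z - (z == z1))%N.
pose c' z := qcoef_diff z1 z (s z) (c z).
apply: (IH s' _ c' N) => [|j hj].
  move: hs; rewrite (bigD1_seq (F := s) z1) // (bigD1_seq (F := s') z1) //=.
  have -> : (\sum_(z <- zs | z != z1) s' z = \sum_(z <- zs | z != z1) s z)%N.
    by apply: eq_bigr => z zn; rewrite /s' (negPf zn) subn0.
  by rewrite /s' eqxx; lia.
have top z : z \in zs -> qpseq z (s z) (c' z) j = qpseq z (s' z) (c' z) j.
  move=> zin; rewrite /s'; case: eqVneq => [->|_]; last by rewrite subn0.
  by case E: (s z1) sz1 => [|m] // _; rewrite subn1 /= qpseq_top // /c' E qcoef_diff_top.
rewrite -(eq_big_seq _ top) (eq_big_seq (fun z =>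
    qpseq z (s z) (c z) (j + 1) - z1 *: qpseq z (s z) (c z) j)) => [|z zin]; last first.
  by rewrite qpseq_diff // nz0.
by rewrite sumrB -scaler_sumr !hN ?scaler0 ?subr0 //; lia.
Qed.

(* Back substitution for the triangular system a x_v + (v+1) x_{v+1} = b_v:
   back_subst a s b t is the unknown x_{s-t}. *)
Fixpoint back_subst (a : C) (s : nat) (b : nat -> V) (t : nat) : V :=
  if t is t'.+1 then a^-1 *: (b (s - t)%N - (s - t')%N%:R *: back_subst a s b t') else 0.

(* T - z0 maps quasi-polynomials with root z onto those of the same degree,
   except that for z = z0 the preimage needs one more degree. *)
Lemma qpseq_antidiff z0 z s (b : nat -> V) : z != 0 ->
  exists c : nat -> V, forall j,
    qpseq z ((z0 == z) + s) c (j + 1) - z0 *: qpseq z ((z0 == z) + s) c j = qpseq z s b j.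
Proof.
move=> zn; have [->|zz0] := eqVneq z0 z.
  exists (fun v => if v is v'.+1 then v'.+1%:R^-1 *: b v' else 0) => j.
  change (true + s)%N with s.+1; rewrite qpseq_diff // qpseq_top ?qcoef_diff_top //.
  apply: qpseq_ext => v vs; rewrite /qcoef_diff subrr scale0r add0r ltnS vs.
  by rewrite scalerA mulfV ?scale1r // pnatr_eq0.
exists (fun v => if (v < s)%N then back_subst (z - z0) s b (s - v) else 0) => j.
change (false + s)%N with s; rewrite qpseq_diff //; apply: qpseq_ext => v vs; rewrite /qcoef_diff vs.
have -> : (s - v = (s - v.+1).+1)%N by lia.
rewrite /= scalerA mulfV ?subr_eq0 1?eq_sym // scale1r.
have -> : (s - (s - v.+1).+1 = v)%N by lia.
have -> : (s - (s - v.+1) = v.+1)%N by lia.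
case: ltnP => h; first by rewrite subrK.
have -> : (s - v.+1 = 0)%N by lia.
by rewrite /= !scaler0 subr0 addr0.
Qed.

End QuasiPolynomials.

Section DifferenceOperators.
Variables (R : comNzRingType) (V : lmodType R).

Definition polyop (P : {poly R}) (u : int -> V) (j : int) : V :=
  \sum_(i < size P) P`_i *: u (j + i%:Z).

Lemma polyop_widen (P : {poly R}) (u : int -> V) j n :
  (size P <= n)%N -> polyop P u j = \sum_(i < n) P`_i *: u (j + i%:Z).
Proof.
move=> hn; rewrite /polyop (big_ord_widen n (fun i => P`_i *: u (j + i%:Z))) //.
rewrite big_mkcond /=; apply: eq_bigr => i _; case: ltnP => // hi.
by rewrite nth_default // scale0r.
Qed.

Lemma polyop0 (u : int -> V) j : polyop 0 u j = 0.
Proof. by rewrite /polyop size_poly0 big_ord0. Qed.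

Lemma polyopD (P Q : {poly R}) (u : int -> V) j :
  polyop (P + Q) u j = polyop P u j + polyop Q u j.
Proof.
pose n := maxn (size P) (size Q).
rewrite (@polyop_widen (P + Q) _ _ n); last by rewrite (leq_trans (size_polyD _ _)).
rewrite (@polyop_widen P _ _ n) ?leq_maxl // (@polyop_widen Q _ _ n) ?leq_maxr //.
by rewrite -big_split; apply: eq_bigr => i _; rewrite coefD scalerDl.
Qed.

Lemma polyopZ (c : R) (P : {poly R}) (u : int -> V) j :
  polyop (c *: P) u j = c *: polyop P u j.
Proof.
rewrite (@polyop_widen _ _ _ (size P)) ?size_scale_leq //.
by rewrite /polyop scaler_sumr; apply: eq_bigr => i _; rewrite coefZ scalerA.
Qed.

Lemma polyopC (c : R) (u : int -> V) j : polyop c%:P u j = c *: u j.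
Proof.
rewrite -[c%:P]mulr1 mul_polyC polyopZ (@polyop_widen _ _ _ 1) ?size_poly1 //.
by rewrite big_ord1 coefC addr0 scale1r.
Qed.

Lemma polyopMX (P : {poly R}) (u : int -> V) j :
  polyop (P * 'X) u j = polyop P u (j + 1).
Proof.
rewrite (@polyop_widen _ _ _ (size P).+1); last first.
  by have [->|P0] := eqVneq P 0; rewrite ?mul0r ?size_poly0 ?size_mulX.
rewrite big_ord_recl coefMX eqxx scale0r add0r /polyop.
by apply: eq_bigr => i _; rewrite coefMX /= add0n /bump leq0n add1n; congr (_ *: u _); lia.
Qed.

Lemma polyopM (P Q : {poly R}) (u : int -> V) j :
  polyop (P * Q) u j = polyop P (polyop Q u) j.
Proof.
elim/poly_ind: P j => [|P c IH] j; first by rewrite mul0r !polyop0.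
rewrite mulrDl -mulrA [_ * Q]mulrC mulrA polyopD mul_polyC polyopZ polyopMX IH.
by rewrite polyopD polyopMX polyopC.
Qed.

Lemma polyop_XsubC (z : R) (u : int -> V) j :
  polyop ('X - z%:P) u j = u (j + 1) - z *: u j.
Proof.
by rewrite polyopD -polyCN polyopC -[X in polyop X]mul1r polyopMX -polyC1 polyopC scale1r scaleNr.
Qed.

Lemma polyop_ext (P : {poly R}) (u w : int -> V) N :
  (forall k, N <= k -> u k = w k) -> forall j, N <= j -> polyop P u j = polyop P w j.
Proof. by move=> h j hj; apply: eq_bigr => i _; rewrite h //; lia. Qed.

Lemma polyop_sum (I : Type) (r : seq I) (Pr : pred I) (P : {poly R}) (f : I -> int -> V) j :
  polyop P (fun k => \sum_(l <- r | Pr l) f l k) j = \sum_(l <- r | Pr l) polyop P (f l) j.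
Proof. by rewrite /polyop exchange_big /=; apply: eq_bigr => i _; rewrite scaler_sumr. Qed.

Lemma polyop_psum (I : Type) (r : seq I) (Pr : pred I) (F : I -> {poly R}) (u : int -> V) j :
  polyop (\sum_(l <- r | Pr l) F l) u j = \sum_(l <- r | Pr l) polyop (F l) u j.
Proof. exact: (big_morph (fun P => polyop P u j) (fun P Q => polyopD P Q u j) (polyop0 u j)). Qed.

Lemma geom_tail (y : R) (e : int -> V) N :
  (forall j, N <= j -> e (j + 1) - y *: e j = 0) ->
  forall k : nat, e (N + k%:Z) = y ^+ k *: e N.
Proof.
move=> h; elim=> [|k IH]; first by rewrite addr0 expr0 scale1r.
move/eqP: (h (N + k%:Z) ltac:(lia)); rewrite subr_eq0 IH scalerA -exprS => /eqP <-.
by congr e; lia.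
Qed.

Lemma shift_factors_kill (r : seq R) (w : int -> V) N :
  (forall j, N <= j -> polyop (\prod_(y <- r | y == 0) ('X - y%:P)) w j = 0) ->
  forall j, N + (size r)%:Z <= j -> w j = 0.
Proof.
elim: r w N => [|y r IH] w N h j hj.
  by rewrite addr0 in hj; have := h j hj; rewrite big_nil -polyC1 polyopC scale1r.
rewrite big_cons in h; case: eqVneq h => [->|yn] h; last by apply: (IH w N h); move: hj => /=; lia.
apply: (IH w (N + 1)) => [k hk|]; last by move: hj => /=; lia.
by have := h (k - 1) ltac:(lia); rewrite polyopM polyop_XsubC scale0r subr0 subrK.
Qed.

End DifferenceOperators.

Section EventualSolutions.
Variables (C : archiClosedFieldType) (V : lmodType C).

(* Structure of the eventual solutions of prod_{y in r} (T - y) u = 0, for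
   nonzero roots y taken from a duplicate-free list zs: on [N, oo), u is a sum
   of quasi-polynomials, of degree count_mem z r at the root z.  Induction on r:
   peel off one factor T - y and integrate with qpseq_antidiff; what is left is
   killed by T - y, hence geometric. *)
Lemma polyop_kernel_qpseq (zs r : seq C) (u : int -> V) (N : int) :
  uniq zs -> (forall z, z \in zs -> z != 0) -> {subset r <= zs} ->
  (forall j, N <= j -> polyop (\prod_(y <- r) ('X - y%:P)) u j = 0) ->
  exists c : C -> nat -> V,
    forall j, N <= j -> u j = \sum_(z <- zs) qpseq z (count_mem z r) (c z) j.
Proof.
move=> uzs nz0; elim: r u => [|y r IH] u hr hu.
  exists (fun _ _ => 0) => j hj; rewrite big1 => [|z _]; last exact: qpseq0.
  by have := hu j hj; rewrite big_nil -polyC1 polyopC scale1r.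
have yin : y \in zs by apply: hr; rewrite inE eqxx.
have [b hb] : exists b : C -> nat -> V, forall j, N <= j ->
    polyop ('X - y%:P) u j = \sum_(z <- zs) qpseq z (count_mem z r) (b z) j.
  apply: IH => [x xr|j hj]; first by apply: hr; rewrite inE xr orbT.
  by rewrite -polyopM; have := hu j hj; rewrite big_cons mulrC.
have [c' hc'] := @list_choice _ _ (fun _ => 0) (fun z (c : nat -> V) => forall j,
    qpseq z (count_mem z (y :: r)) c (j + 1) - y *: qpseq z (count_mem z (y :: r)) c j =
    qpseq z (count_mem z r) (b z) j) zs (fun z zin => @qpseq_antidiff C V y z _ (b z) (nz0 z zin)).
pose w j := \sum_(z <- zs) qpseq z (count_mem z (y :: r)) (c' z) j.
pose e j := u j - w j.
have e_geom : forall j, N <= j -> e (j + 1) - y *: e j = 0.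
  move=> j hj.
  have -> : e (j + 1) - y *: e j = (u (j + 1) - y *: u j) - (w (j + 1) - y *: w j).
    by rewrite /e scalerBr !opprB addrACA [RHS]addrACA [- w _ + _]addrC.
  rewrite -polyop_XsubC hb // /w scaler_sumr -sumrB (eq_big_seq _ (fun z zin => hc' z zin j)); exact: subrr.
pose d0 := y ^ (- N) *: e N.
exists (fun z i => c' z i + (if (z == y) && (i == 0%N) then d0 else 0)) => j hj.
under eq_bigr => z _ do rewrite qpseqD.
rewrite big_split /= -/(w j) (bigD1_seq y) //= big1_seq => [|z /andP [zy _]]; last first.
  by apply: qpseq0 => i _; rewrite (negPf zy).
rewrite addr0 /qpseq eqxx big_ord_recl big1 => [|i _] /=; last by rewrite scaler0.
rewrite addr0 Phi1.
have -> : y ^ j *: d0 = e j.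
  rewrite /d0 scalerA -expfzDr ?nz0 //.
  have -> : j - N = (`|j - N|%N)%:Z by lia.
  by rewrite -exprnP -geom_tail //; congr e; lia.
by rewrite /e addrC subrK.
Qed.

End EventualSolutions.

Lemma sqr_add_le (R : numFieldType) (a b e : R) : 0 <= a -> 0 <= b -> 0 < e ->
  (a + b) ^+ 2 <= (1 + e) * a ^+ 2 + (1 + e^-1) * b ^+ 2.
Proof.
move=> a0 b0 e0; rewrite -subr_ge0.
have -> : (1 + e) * a ^+ 2 + (1 + e^-1) * b ^+ 2 - (a + b) ^+ 2 = (e * a - b) ^+ 2 / e.
  by field; rewrite gt_eqF.
apply: divr_ge0; last exact: ltW.
rewrite -realEsqr; apply: rpredB; apply: ger0_real => //.
by rewrite mulr_ge0 // ltW.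
Qed.

Lemma psum_le (R : numDomainType) (F : nat -> R) m n :
  (forall i, 0 <= F i) -> (m <= n)%N -> \sum_(i < m) F i <= \sum_(i < n) F i.
Proof.
move=> h hmn; rewrite -!(big_mkord xpredT) (@big_cat_nat _ _ _ m 0 n _ _ (leq0n m) hmn) /=.
by rewrite lerDl sumr_ge0.
Qed.

Section SquareSummable.
Variables (C : archiClosedFieldType) (d : nat).
Implicit Types (u w : int -> 'cV[C]_d).

Lemma sqnorm_ge0 (x : 'cV[C]_d) : 0 <= sqnorm x.
Proof. by apply: sumr_ge0 => m _; rewrite exprn_ge0. Qed.

Lemma sqnorm0 : sqnorm (0 : 'cV[C]_d) = 0.
Proof. by rewrite /sqnorm big1 // => m _; rewrite mxE normr0 expr0n. Qed.

Lemma sqnormZ (a : C) (x : 'cV[C]_d) : sqnorm (a *: x) = `|a| ^+ 2 * sqnorm x.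
Proof. by rewrite /sqnorm mulr_sumr; apply: eq_bigr => m _; rewrite mxE normrM exprMn. Qed.

Lemma sqnorm_eq0 (x : 'cV[C]_d) : sqnorm x = 0 -> x = 0.
Proof.
move=> h; apply/matrixP => m k; rewrite (ord1 k) mxE.
have := @psumr_eq0P _ _ predT (fun m => `|x m 0| ^+ 2)
  (fun m _ => exprn_ge0 _ (normr_ge0 _)) h m isT.
by move/eqP; rewrite expf_eq0 /= normr_eq0 => /eqP.
Qed.

Lemma sqnormD_le (x y : 'cV[C]_d) (e : C) : 0 < e ->
  sqnorm (x + y) <= (1 + e) * sqnorm x + (1 + e^-1) * sqnorm y.
Proof.
move=> e0; rewrite /sqnorm !mulr_sumr -big_split /=; apply: ler_sum => m _.
rewrite mxE; apply: le_trans (sqr_add_le (normr_ge0 _) (normr_ge0 _) e0).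
by rewrite lerXn2r ?nnegrE ?addr_ge0 // ler_normD.
Qed.

Definition l2_from u (N : int) : Prop :=
  exists M : C, forall n : nat, \sum_(i < n) sqnorm (u (N + i%:Z)) <= M.

Lemma l2_ext u w N : (forall k, N <= k -> u k = w k) -> l2_from u N -> l2_from w N.
Proof.
move=> h [M hM]; exists M => n.
rewrite (eq_bigr (fun i : 'I_n => sqnorm (u (N + i%:Z)))); first exact: hM.
by move=> i _; rewrite h //; lia.
Qed.

Lemma l2_zero N : l2_from (fun _ => 0) N.
Proof. by exists 0 => n; rewrite big1 // => i _; rewrite sqnorm0. Qed.

Lemma l2_finite u N (K : nat) : (forall k, N + K%:Z <= k -> u k = 0) -> l2_from u N.
Proof.
move=> h; exists (\sum_(i < K) sqnorm (u (N + i%:Z))) => n.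
apply: le_trans (psum_le (fun i => sqnorm_ge0 (u (N + i%:Z))) (leq_addr K n)) _.
rewrite -!(big_mkord xpredT (fun i => sqnorm (u (N + i%:Z)))).
rewrite (@big_cat_nat _ _ _ K 0 (n + K) _ _ (leq0n K) (leq_addl n K)) /= [X in _ + X]big_nat_cond.
rewrite [X in _ + X]big1 ?addr0 // => i /andP [/andP [hi _] _].
by rewrite h ?sqnorm0 //; lia.
Qed.

Lemma l2_add u w N : l2_from u N -> l2_from w N -> l2_from (fun j => u j + w j) N.
Proof.
move=> [M1 h1] [M2 h2]; exists (2 * M1 + 2 * M2) => n.
apply: (@le_trans _ _ (\sum_(i < n)
    (2 * sqnorm (u (N + i%:Z)) + 2 * sqnorm (w (N + i%:Z))))).
  by apply: ler_sum => i _; have := sqnormD_le (u (N + i%:Z)) (w (N + i%:Z)) ltr01; rewrite invr1.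
by rewrite big_split /= -!mulr_sumr; apply: lerD; apply: ler_wpM2l; rewrite ?ler0n ?h1 ?h2.
Qed.

Lemma l2_scale u (a : C) N : l2_from u N -> l2_from (fun j => a *: u j) N.
Proof.
move=> [M h]; exists (`|a| ^+ 2 * M) => n.
by under eq_bigr => i _ do rewrite sqnormZ; rewrite -mulr_sumr ler_wpM2l ?exprn_ge0.
Qed.

Lemma l2_sum (I : eqType) (r : seq I) (Pr : pred I) (f : I -> int -> 'cV[C]_d) N :
  (forall x, x \in r -> Pr x -> l2_from (f x) N) ->
  l2_from (fun j => \sum_(x <- r | Pr x) f x j) N.
Proof.
elim: r => [|x r IH] h.
  by apply: l2_ext (l2_zero N) => k _; rewrite big_nil.
have IH' := IH (fun y yr => h y (@mem_behead _ (x :: r) _ yr)).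
case hx: (Pr x); last by apply: l2_ext IH' => k _; rewrite big_cons hx.
by apply: l2_ext (l2_add (h x (mem_head _ _) hx) IH') => k _; rewrite big_cons hx.
Qed.

Lemma l2_mono u N (k : nat) : l2_from u N -> l2_from u (N + k%:Z).
Proof.
move=> [M h]; exists M => n; apply: le_trans (h (k + n)%N).
rewrite big_split_ord /= -[X in X <= _]add0r lerD ?sumr_ge0 // => [i _|].
  exact: sqnorm_ge0.
by rewrite le_eqVlt; apply/orP; left; apply/eqP; apply: eq_bigr => i _; congr (sqnorm (u _)); lia.
Qed.

Lemma l2_polyop (P : {poly C}) u N : l2_from u N -> l2_from (polyop P u) N.
Proof.
move=> h; rewrite /polyop; apply: (@l2_ext (fun j => \sum_(i <- enum 'I_(size P) | true)
   P`_i *: u (j + i%:Z))); first by move=> k _; rewrite big_enum.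
apply: l2_sum => i _ _; apply: l2_scale.
have [M hM] := l2_mono i h; exists M => n; apply: le_trans (hM n).
by rewrite le_eqVlt; apply/orP; left; apply/eqP; apply: eq_bigr => t _; congr (sqnorm (u _)); lia.
Qed.

End SquareSummable.

Section DecayOfSolutions.
Variables (C : archiClosedFieldType) (d : nat).
Implicit Types (u v : int -> 'cV[C]_d).

(* A geometric sequence with ratio of modulus >= 1 is square-summable only if
   it vanishes: otherwise its partial sums grow at least linearly, which the
   archimedean property forbids. *)
Lemma l2_geom_zero (y : C) u N : 1 <= `|y| ->
  (forall k : nat, u (N + k%:Z) = y ^+ k *: u N) -> l2_from u N -> u N = 0.
Proof.
move=> hy hg [M hM]; apply: sqnorm_eq0.
have M0 : 0 <= M by have := hM 0%N; rewrite big_ord0.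
have x0 := sqnorm_ge0 (u N).
have linear_growth n : n%:R * sqnorm (u N) <= M.
  apply: le_trans (hM n).
  have -> : n%:R * sqnorm (u N) = \sum_(i < n) sqnorm (u N).
    by rewrite sumr_const card_ord mulr_natl.
  apply: ler_sum => i _; rewrite hg sqnormZ normrX ler_peMl //.
  by apply: exprn_ege1; apply: exprn_ege1.
apply/eqP; apply: contraT => xn0.
have xp : 0 < sqnorm (u N) by rewrite lt_def xn0 x0.
have := @archi_boundP _ (M / sqnorm (u N)) (divr_ge0 M0 x0).
rewrite ltr_pdivrMr // => hlt.
by have := le_lt_trans (linear_growth (Num.Def.archi_bound (M / sqnorm (u N)))) hlt; rewrite ltxx.
Qed.

Lemma l2_polyop_kernel_zero (r : seq C) v N : (forall y, y \in r -> 1 <= `|y|) ->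
  l2_from v N -> (forall j, N <= j -> polyop (\prod_(y <- r) ('X - y%:P)) v j = 0) ->
  forall j, N <= j -> v j = 0.
Proof.
elim: r v => [|y r IH] v hr hv hP.
  by move=> j hj; have := hP j hj; rewrite big_nil -polyC1 polyopC scale1r.
have hw : forall j, N <= j -> polyop ('X - y%:P) v j = 0.
  apply: IH (l2_polyop _ hv) _ => [x xr|j hj]; first by apply: hr; rewrite inE xr orbT.
  by rewrite -polyopM; have := hP j hj; rewrite big_cons mulrC.
have hg := geom_tail (fun j hj => etrans (esym (polyop_XsubC _ _ _)) (hw j hj)).
have vN : v N = 0 by apply: l2_geom_zero hg hv; apply: hr; rewrite inE eqxx.
move=> j hj; have -> : j = N + (`|j - N|%N)%:Z by lia.
by rewrite hg vN scaler0.
Qed.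

(* For |z| < 1, if (T - z) u is square-summable on [N, oo) then so is u: with
   th = (1 + e)|z|^2 < 1, the partial sums satisfy S_n <= A + th S_n. *)
Lemma l2_antidiff (z : C) u N :
  `|z| < 1 -> l2_from (fun j => u (j + 1) - z *: u j) N -> l2_from u N.
Proof.
move=> hz [Mw hw].
have Mw0 : 0 <= Mw by have := hw 0%N; rewrite big_ord0.
pose r := `|z| ^+ 2.
have r0 : 0 <= r by rewrite exprn_ge0.
have r1 : r < 1 by rewrite exprn_ilt1.
have r1p : 0 < 1 + r by apply: (lt_le_trans ltr01); rewrite lerDl.
pose e := (1 - r) / (1 + r).
have e0 : 0 < e by rewrite divr_gt0 // subr_gt0.
pose th := (1 + e) * r.
have the : 1 - th = e by rewrite /th /e; field; rewrite gt_eqF.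
pose K := 1 + e^-1.
have K0 : 0 <= K by rewrite addr_ge0 // invr_ge0 ltW.
have th0 : 0 <= th by rewrite mulr_ge0 // addr_ge0 // ltW.
have step j : sqnorm (u (j + 1)) <= th * sqnorm (u j) + K * sqnorm (u (j + 1) - z *: u j).
  set w := u (j + 1) - z *: u j.
  have -> : u (j + 1) = z *: u j + w by rewrite /w [RHS]addrC subrK.
  by apply: le_trans (sqnormD_le _ _ e0) _; rewrite sqnormZ mulrA.
pose A := sqnorm (u N) + K * Mw.
pose S n := \sum_(i < n) sqnorm (u (N + i%:Z)).
have hS n : S n <= A + th * S n.
  case: n => [|n].
    by rewrite /S big_ord0 mulr0 addr0 addr_ge0 ?sqnorm_ge0 // mulr_ge0.
  rewrite {1}/S big_ord_recl addr0 /A -addrA lerD2l.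
  apply: (@le_trans _ _ (\sum_(i < n) (th * sqnorm (u (N + i%:Z)) +
      K * sqnorm (u (N + i%:Z + 1) - z *: u (N + i%:Z))))).
    apply: ler_sum => i _; apply: le_trans (step (N + i%:Z)).
    by rewrite le_eqVlt; apply/orP; left; apply/eqP; congr (sqnorm (u _)); rewrite /= /bump /=; lia.
  rewrite big_split /= -!mulr_sumr addrC; apply: lerD; first by rewrite ler_wpM2l // hw.
  apply: ler_wpM2l => //.
  by apply: (@psum_le _ (fun i => sqnorm (u (N + i%:Z)))) => // i; exact: sqnorm_ge0.
exists (A / e) => n; rewrite ler_pdivlMr // -the mulrBr mulr1 lerBlDr.
by move: (hS n); rewrite /S /= [th * _]mulrC.
Qed.

Lemma l2_qpseq (z : C) s (c : nat -> 'cV[C]_d) N :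
  z != 0 -> `|z| < 1 -> l2_from (qpseq z s c) N.
Proof.
move=> z0 hz; elim: s c => [|s IH] c.
  by apply: (l2_ext _ (l2_zero C d N)) => k _; rewrite /qpseq big_ord0.
apply: l2_antidiff hz _; apply: (l2_ext _ (IH (qcoef_diff z z s.+1 c))) => k _.
by rewrite qpseq_diff // qpseq_top // qcoef_diff_top.
Qed.

End DecayOfSolutions.

Section MatrixDifferenceOperators.
Variables (R : comNzRingType) (d : nat).
Implicit Types (psi : int -> 'cV[R]_d) (M : 'M[{poly R}]_d).

Definition entry (l : 'I_d) psi : int -> R^o := fun k => psi k l 0.

Definition mxop M psi : int -> 'cV[R]_d :=
  fun j => \col_i \sum_l polyop (M i l) (entry l psi) j.

Lemma mxopM (A B : 'M[{poly R}]_d) psi j : mxop (A *m B) psi j = mxop A (mxop B psi) j.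
Proof.
apply/matrixP => i k; rewrite !mxE.
under eq_bigr => l _ do rewrite mxE polyop_psum.
rewrite exchange_big /=; apply: eq_bigr => m _.
transitivity (polyop (A i m) (fun t => \sum_l polyop (B m l) (entry l psi) t) j).
  by rewrite polyop_sum; apply: eq_bigr => l _; rewrite polyopM.
by apply: eq_bigr => t _; rewrite /entry mxE.
Qed.

Lemma mxop_scalar (D : {poly R}) psi j : mxop D%:M psi j = polyop D psi j.
Proof.
apply/matrixP => i k; rewrite (ord1 k) mxE (bigD1 i) //= big1 => [|l li]; last first.
  by rewrite mxE eq_sym (negPf li) mulr0n polyop0.
by rewrite mxE eqxx mulr1n addr0 /polyop summxE; apply: eq_bigr => t _; rewrite mxE.
Qed.

Lemma mxop_sum M (I : Type) (r : seq I) (Pr : pred I) (f : I -> int -> 'cV[R]_d) j :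
  mxop M (fun t => \sum_(x <- r | Pr x) f x t) j = \sum_(x <- r | Pr x) mxop M (f x) j.
Proof.
apply/matrixP => i k; rewrite !mxE summxE.
under [RHS]eq_bigr => x _ do rewrite mxE.
rewrite exchange_big /=; apply: eq_bigr => l _.
rewrite -(polyop_sum r Pr (M i l) (fun x => entry l (f x))).
by apply: eq_bigr => t _; rewrite /entry summxE.
Qed.

Lemma mxop_ext M psi (phi : int -> 'cV[R]_d) N :
  (forall k, N <= k -> psi k = phi k) -> forall j, N <= j -> mxop M psi j = mxop M phi j.
Proof.
move=> h j hj; apply/matrixP => i k; rewrite !mxE; apply: eq_bigr => l _.
by apply: (@polyop_ext R R^o _ _ _ N) => // t ht; rewrite /entry h.
Qed.

End MatrixDifferenceOperators.

Section QuasiPolynomialStability.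
Variables (C : archiClosedFieldType) (V : lmodType C).

Lemma qpseq_shiftn (z : C) s (c : nat -> V) t (k : nat) :
  z != 0 -> qpseq z s c (t + k%:Z) = qpseq z s (iter k (qcoef_diff 0 z s) c) t.
Proof.
move=> z0; elim: k t => [|k IH] t; first by rewrite addr0.
have -> : t + k.+1%:Z = (t + 1) + k%:Z by lia.
by rewrite IH -qpseq_diff // scale0r subr0.
Qed.

Definition qcoef_polyop (P : {poly C}) (z : C) s (c : nat -> V) : nat -> V :=
  fun v => \sum_(k < size P) P`_k *: iter k (qcoef_diff 0 z s) c v.

Lemma polyop_qpseq (P : {poly C}) (z : C) s (c : nat -> V) t :
  z != 0 -> polyop P (qpseq z s c) t = qpseq z s (qcoef_polyop P z s c) t.
Proof.
move=> z0; rewrite /polyop.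
under eq_bigr => k _ do rewrite qpseq_shiftn // /qpseq scaler_sumr.
rewrite exchange_big /=; apply: eq_bigr => v _.
by rewrite /qcoef_polyop scaler_sumr; apply: eq_bigr => k _; rewrite !scalerA mulrC.
Qed.

End QuasiPolynomialStability.

Section BBLTransformations.
Variables (C : archiClosedFieldType) (d : nat) (p q : int) (a : int -> 'M[C]_d).
Implicit Types (psi phi : int -> 'cV[C]_d).

(* The polynomial matrix w^{-p} A(w, w^{-1}); its determinant is
   shifted_symbol_det p q a by definition. *)
Definition symbol_mx : 'M[{poly C}]_d :=
  \matrix_(i < d, l < d) \sum_(k < (`|q - p|%N).+1) (a (p + k%:Z) i l)%:P * 'X^k.

Lemma bbl_mxop psi j : bbl p q a psi j = mxop symbol_mx psi (j + p).
Proof.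
apply/matrixP => i k; rewrite (ord1 k) /bbl summxE mxE.
have entry_poly l : symbol_mx i l = \poly_(k < (`|q - p|%N).+1) a (p + k%:Z) i l.
  by rewrite mxE poly_def; apply: eq_bigr => k' _; rewrite mul_polyC.
under [RHS]eq_bigr => l _ do rewrite entry_poly (polyop_widen _ _ (size_poly _ _)).
rewrite exchange_big /=; apply: eq_bigr => t _; rewrite mxE.
by apply: eq_bigr => l _; rewrite coef_poly ltn_ord /entry /= addrA.
Qed.

Lemma bblD psi phi j : bbl p q a (fun t => psi t + phi t) j = bbl p q a psi j + bbl p q a phi j.
Proof. by rewrite /bbl -big_split; apply: eq_bigr => k _; rewrite mulmxDr. Qed.

Lemma bblB psi phi j : bbl p q a (fun t => psi t - phi t) j = bbl p q a psi j - bbl p q a phi j.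
Proof. by rewrite /bbl -sumrB; apply: eq_bigr => k _; rewrite mulmxBr. Qed.

Lemma bbl_sum (I : Type) (r : seq I) (Pr : pred I) (f : I -> int -> 'cV[C]_d) j :
  bbl p q a (fun t => \sum_(x <- r | Pr x) f x t) j = \sum_(x <- r | Pr x) bbl p q a (f x) j.
Proof. by rewrite bbl_mxop mxop_sum; apply: eq_bigr => x _; rewrite bbl_mxop. Qed.

Lemma bbl_ext psi phi N :
  (forall k, N <= k -> psi k = phi k) -> forall j, N - p <= j -> bbl p q a psi j = bbl p q a phi j.
Proof. by move=> h j hj; rewrite !bbl_mxop; apply: mxop_ext h _ _; lia. Qed.

(* Multiplying by the adjugate of the symbol: if A psi vanishes on [N, oo),
   then det(w^{-p} A)(T) psi vanishes on [N + p, oo). *)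
Lemma bulk_det psi N : (forall j, N <= j -> bbl p q a psi j = 0) ->
  forall j, N + p <= j -> polyop (shifted_symbol_det p q a) psi j = 0.
Proof.
move=> h j hj; rewrite -mxop_scalar -mul_adj_mx mxopM.
rewrite (@mxop_ext _ _ _ _ (fun _ => 0) (N + p)) // => [|t ht]; last first.
  by rewrite -[t](subrK p) -bbl_mxop h //; lia.
apply/matrixP => i k; rewrite !mxE big1 // => l _; rewrite /polyop big1 // => t _.
by apply/eqP; rewrite scaler_eq0; apply/orP; right; rewrite /entry mxE.
Qed.

Lemma entry_qpseq (z : C) s (c : nat -> 'cV[C]_d) l t :
  entry l (qpseq z s c) t = qpseq z s (fun v => (c v l 0 : C^o)) t.
Proof. by rewrite /entry /qpseq summxE; apply: eq_bigr => v _; rewrite mxE. Qed.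

Definition qcoef_mxop (M : 'M[{poly C}]_d) (z : C) s (c : nat -> 'cV[C]_d) : nat -> 'cV[C]_d :=
  fun v => \col_i \sum_l qcoef_polyop (M i l) z s (fun w => (c w l 0 : C^o)) v.

Lemma mxop_qpseq (M : 'M[{poly C}]_d) (z : C) s (c : nat -> 'cV[C]_d) t :
  z != 0 -> mxop M (qpseq z s c) t = qpseq z s (qcoef_mxop M z s c) t.
Proof.
move=> z0; apply/matrixP => i k; rewrite (ord1 k) mxE.
transitivity (\sum_l qpseq z s (qcoef_polyop (M i l) z s (fun v => (c v l 0 : C^o))) t).
  by apply: eq_bigr => l _; rewrite -polyop_qpseq //; apply: eq_bigr => x _; rewrite entry_qpseq.
rewrite /qpseq summxE.
under [RHS]eq_bigr => v _ do rewrite !mxE mulr_sumr.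
by rewrite exchange_big.
Qed.

End BBLTransformations.

Section SquareSummableSolutions.
Variables (C : archiClosedFieldType) (d : nat).
Implicit Types (psi : int -> 'cV[C]_d).

(* Factor D = lc * prod_y (X - y) over its roots: the factors with y = 0 only
   shift, and those with |y| >= 1 cannot annihilate a nonzero square-summable
   sequence, so a square-summable eventual solution of D(T) psi = 0 is
   eventually annihilated by the factors with 0 < |y| < 1 alone. *)
Lemma l2_inner_factor (D : {poly C}) psi N :
  D != 0 -> l2_from psi N -> (forall j, N <= j -> polyop D psi j = 0) ->
  exists (rin : seq C) (N' : int), [/\ N <= N',
    forall y, y \in rin -> [/\ y != 0, `|y| < 1 & root D y],
    forall z, z != 0 -> `|z| < 1 -> count_mem z rin = mup z D &
    forall j, N' <= j -> polyop (\prod_(y <- rin) ('X - y%:P)) psi j = 0].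
Proof.
move=> D0 hl2 hD; have [rs hrs] := closed_field_poly_normal D.
have lc0 : lead_coef D != 0 by rewrite lead_coef_eq0.
pose r1 := [seq y <- rs | y != 0].
pose rin := [seq y <- r1 | `|y| < 1].
pose rout := [seq y <- r1 | ~~ (`|y| < 1)].
pose N1 := N + (size rs)%:Z.
have hP1 : forall j, N1 <= j -> polyop (\prod_(y <- r1) ('X - y%:P)) psi j = 0.
  apply: (shift_factors_kill (w := polyop _ psi) (N := N)) => j hj.
  have := hD j hj; rewrite {1}hrs polyopZ => /eqP; rewrite scaler_eq0 (negPf lc0) /= => /eqP.
  by rewrite (bigID (fun y => y == 0)) /= polyopM big_filter.
exists rin, N1; split=> [|y|z zn hz|].
- by rewrite /N1; lia.
- rewrite !mem_filter => /and3P [hy yn yrs]; split=> //.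
  by rewrite hrs rootZ // root_prod_XsubC.
- rewrite hrs -mul_polyC mupMr ?rootC // mu_prod_XsubC.
  rewrite /rin /r1 !count_filter; apply: eq_count => x /=.
  by case: eqVneq => [->|] //=; rewrite hz zn.
- apply: (l2_polyop_kernel_zero (r := rout)) => [y||j hj].
  + by rewrite mem_filter => /andP [hy _]; rewrite real_leNgt ?real1 ?normr_real.
  + by apply: l2_polyop; apply: l2_mono.
  + have := hP1 j hj; rewrite (bigID (fun y => `|y| < 1)) /= mulrC polyopM !big_filter; exact.
Qed.

Lemma l2_kernel_qpseq (D : {poly C}) (zs : seq C) psi N :
  D != 0 -> uniq zs -> (forall z, z \in zs <-> z != 0 /\ root D z) ->
  l2_from psi N -> (forall j, N <= j -> polyop D psi j = 0) ->
  exists (N' : int) (c : C -> nat -> 'cV[C]_d), N <= N' /\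
    forall j, N' <= j -> psi j = \sum_(z <- zs | `|z| < 1) qpseq z (mup z D) (c z) j.
Proof.
move=> D0 uzs hzs hl2 hD.
have [rin [N' [hN' rin_roots rin_mult hrin]]] := l2_inner_factor D0 hl2 hD.
have nz z : z \in [seq z <- zs | `|z| < 1] -> z != 0.
  by rewrite mem_filter => /andP [_ /hzs []].
have [y|c hc] := polyop_kernel_qpseq (filter_uniq _ uzs) nz _ hrin.
  by move/rin_roots => [yn hy ry]; rewrite mem_filter hy; apply/hzs.
exists N', c; split => // j hj; rewrite hc // big_filter.
rewrite [LHS]big_seq_cond [RHS]big_seq_cond; apply: eq_bigr => z /andP [zzs hz].
by rewrite rin_mult //; move/hzs: zzs => [].
Qed.

End SquareSummableSolutions.

Section Interface.
Variables (C : archiClosedFieldType) (d : nat).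
Implicit Types (psi : vseq C d).

Lemma col_delta (x : 'cV[C]_d) (b : C) :
  b *: x = \sum_(m < d) (x m 0 * b) *: delta_mx m 0.
Proof.
rewrite {1}(matrix_sum_delta x) scaler_sumr; apply: eq_bigr => m _.
by rewrite big_ord1 scalerA mulrC.
Qed.

Lemma in_T_qpseq (z : C) s psi :
  in_T z s psi <-> exists c : nat -> 'cV[C]_d, psi = qpseq z s c.
Proof.
split=> [[c hc]|[c ->]]; last first.
  by exists (fun v m => c v m 0) => j; apply: eq_bigr => v _; rewrite col_delta.
exists (fun v => \col_m (\sum_(o : 'I_s | val o == v) c o m)).
apply: functional_extensionality => j.
rewrite hc /qpseq; apply: eq_bigr => v _; rewrite col_delta; apply: eq_bigr => m _.
rewrite mxE (big_pred1 v) // => o /=; exact: val_eqE.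
Qed.

Lemma iter_projT psi (k : nat) j :
  1 <= j -> iter k (fun phi => projLinf 1 (shiftT phi)) psi j = psi (j + k%:Z).
Proof.
elim: k j => [|k IH] j hj; first by rewrite addr0.
rewrite /= /projLinf hj /shiftT IH; last by lia.
by congr psi; lia.
Qed.

Lemma F1minus_finite p q (a : int -> 'M[C]_d) psi :
  F1minus p q a psi -> exists k : nat, forall j, 1 + k%:Z <= j -> psi j = 0.
Proof.
move=> [_ [k [_ hk]]]; exists k => j hj.
have := congr1 (fun g => g (j - k%:Z)) hk; rewrite /= iter_projT; last by lia.
by rewrite subrK.
Qed.

Lemma F1minus_of_finite p q (a : int -> 'M[C]_d) psi (k : nat) :
  M1inf p q a psi -> (forall j, 1 + k%:Z <= j -> psi j = 0) -> F1minus p q a psi.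
Proof.
move=> hM hk; split=> //; exists k.+1; split=> //.
apply: functional_extensionality => j; case: (ltP j 1) => hj.
  by rewrite /= /projLinf ifF //; apply/negbTE; rewrite -ltNge.
by rewrite iter_projT // hk //; lia.
Qed.

Lemma in_H_l2 psi : in_H psi <-> in_V1inf psi /\ l2_from psi 1.
Proof.
have partial_sums n : \sum_(1 <= j < n.+1) sqnorm (psi j%:Z) = \sum_(i < n) sqnorm (psi (1 + i%:Z)).
  by rewrite big_add1 /= big_mkord; apply: eq_bigr => i _; congr (sqnorm (psi _)); lia.
by split=> [] [h0 [M hM]]; split=> //; exists M => n; rewrite ?partial_sums // -partial_sums.
Qed.

Lemma M1inf_bulk p q (a : int -> 'M[C]_d) psi :
  M1inf p q a psi -> forall j, 1 - pprime p <= j -> bbl p q a psi j = 0.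
Proof. by move=> [_ hbulk] j hj; have := congr1 (fun g => g j) hbulk; rewrite /= /projLinf hj. Qed.

End Interface.

Lemma pprime_le (p : int) : pprime p <= p.
Proof. by rewrite /pprime ge_min lexx. Qed.

Section HalfInfiniteBulkSolutions.
Variables (C : archiClosedFieldType) (d : nat) (p q : int) (a : int -> 'M[C]_d) (zs : seq C).
Hypotheses (reg : regular p q a) (uzs : uniq zs)
  (roots : forall z : C, z \in zs <-> nonzero_root_of_det p q a z).

Let zin := [seq z <- zs | `|z| < 1].
Let mult (z : C) := root_mult p q a z.

Let uniq_zin : uniq zin. Proof. exact: filter_uniq. Qed.

Let zin_nz z : z \in zin -> z != 0.
Proof. by rewrite mem_filter => /andP [_ /roots []]. Qed.

Definition kerT (z : C) (psi : vseq C d) : Prop := in_kerA p q a psi /\ in_T z (mult z) psi.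

Let sum_in (phi : C -> vseq C d) (j : int) := \sum_(z <- zs | `|z| < 1) phi z j.

Lemma kerT_coefs (phi : C -> vseq C d) :
  (forall z, z \in zs -> `|z| < 1 -> kerT z (phi z)) ->
  exists c : C -> nat -> 'cV[C]_d,
    (forall z, z \in zin -> phi z = qpseq z (mult z) (c z)) /\
    forall j, sum_in phi j = \sum_(z <- zin) qpseq z (mult z) (c z) j.
Proof.
move=> hK.
have [c hc] : exists c : C -> nat -> 'cV[C]_d,
    forall z, z \in zin -> phi z = qpseq z (mult z) (c z).
  apply: (@list_choice _ _ (fun _ => 0) (fun z (c : nat -> 'cV[C]_d) => phi z = qpseq z (mult z) c)) => z; rewrite mem_filter => /andP [hz zzs]; by have [_ /in_T_qpseq] := hK z zzs hz.
exists c; split => // j; rewrite /sum_in big_filter [LHS]big_seq_cond [RHS]big_seq_cond.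
by apply: eq_bigr => z /andP [zzs hz]; rewrite hc // mem_filter hz zzs.
Qed.

Lemma qpseq_sum_zero (c : C -> nat -> 'cV[C]_d) N :
  (forall j, N <= j -> \sum_(z <- zin) qpseq z (mult z) (c z) j = 0) ->
  forall z, z \in zin -> forall j, qpseq z (mult z) (c z) j = 0.
Proof. by move=> h z zz j; apply: qpseq0; apply: (qpseq_indep uniq_zin zin_nz h). Qed.

Lemma kerT_sum_direct (phi : C -> vseq C d) :
  (forall z, z \in zs -> `|z| < 1 -> kerT z (phi z)) ->
  (forall j, sum_in phi j = 0) ->
  forall z, z \in zs -> `|z| < 1 -> phi z = (fun _ => 0).
Proof.
move=> hK h0 z zzs hz; have [c [hc hsum]] := kerT_coefs hK.
have zz : z \in zin by rewrite mem_filter hz zzs.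
rewrite hc //; apply: functional_extensionality => j.
by apply: (qpseq_sum_zero (N := 0)) => // i _; rewrite -hsum.
Qed.

(* Part (2): F_1^- meets P_{1,oo} (sum of the kerT z) trivially: elements of
   F_1^- are finitely supported, so the quasi-polynomial part vanishes far out. *)
Lemma F1minus_kerT_direct (f : vseq C d) (phi : C -> vseq C d) :
  F1minus p q a f -> (forall z, z \in zs -> `|z| < 1 -> kerT z (phi z)) ->
  (forall j, f j + projLinf 1 (sum_in phi) j = 0) ->
  f = (fun _ => 0) /\ projLinf 1 (sum_in phi) = (fun _ => 0).
Proof.
move=> hf hK h; have [c [_ hsum]] := kerT_coefs hK.
have [k hk] := F1minus_finite hf.
have far i : 1 + k%:Z <= i -> \sum_(z <- zin) qpseq z (mult z) (c z) i = 0.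
  by move=> hi; have := h i; rewrite hk // add0r /projLinf hsum ifT //; lia.
have sum0 j : sum_in phi j = 0.
  by rewrite hsum big1_seq // => z /andP [_ zz]; apply: qpseq_sum_zero far z zz j.
have P0 : projLinf 1 (sum_in phi) = (fun _ => 0).
  by apply: functional_extensionality => j; rewrite /projLinf sum0; case: ifP.
by split => //; apply: functional_extensionality => j; have := h j; rewrite P0 addr0.
Qed.

(* The quasi-polynomial parts of a bulk solution lie in ker A: A maps each
   qpseq z s c to a quasi-polynomial with the same root, and these add up to
   A psi, which vanishes far out; conclude by linear independence. *)
Lemma qpseq_parts_in_kernel (psi : vseq C d) (c : C -> nat -> 'cV[C]_d) N N' :
  (forall j, N <= j -> bbl p q a psi j = 0) ->
  (forall j, N' <= j -> psi j = \sum_(z <- zin) qpseq z (mult z) (c z) j) ->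
  forall z, z \in zin -> in_kerA p q a (qpseq z (mult z) (c z)).
Proof.
move=> hbulk hdec.
pose c' z := qcoef_mxop (symbol_mx p q a) z (mult z) (c z).
have far t : Num.max (N + p) N' <= t -> \sum_(z <- zin) qpseq z (mult z) (c' z) t = 0.
  rewrite ge_max => /andP [htN htN'].
  have -> : \sum_(z <- zin) qpseq z (mult z) (c' z) t = mxop (symbol_mx p q a) psi t.
    rewrite -(eq_big_seq _ (fun z zz => mxop_qpseq _ _ _ t (zin_nz zz))) -mxop_sum.
    by apply: esym; apply: (@mxop_ext _ _ _ _ _ N') => // k hk; rewrite hdec.
  by rewrite -[t](subrK p) -bbl_mxop hbulk //; lia.
move=> z zz; apply: functional_extensionality => j.
by rewrite bbl_mxop mxop_qpseq ?zin_nz // (qpseq_sum_zero far).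
Qed.

Lemma proj_kernel_bulk (g : vseq C d) :
  in_kerA p q a g -> forall j, 1 - pprime p <= j -> bbl p q a (projLinf 1 g) j = 0.
Proof.
move=> hg j hj; rewrite (@bbl_ext _ _ _ _ _ _ g 1) => [|k hk|]; last 2 first.
- by rewrite /projLinf hk.
- by have := pprime_le p; lia.
by rewrite hg.
Qed.

Lemma sum_in_kernel (phi : C -> vseq C d) :
  (forall z, z \in zs -> `|z| < 1 -> kerT z (phi z)) -> in_kerA p q a (sum_in phi).
Proof.
move=> hK; apply: functional_extensionality => j; rewrite bbl_sum big1_seq // => z /andP [hz zzs].
by have [hk _] := hK z zzs hz; rewrite hk.
Qed.

Lemma bulk_l2_decompose (psi : vseq C d) :
  M1inf p q a psi -> in_H psi ->
  exists (f : vseq C d) (phi : C -> vseq C d),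
    [/\ F1minus p q a f, (forall z, z \in zs -> `|z| < 1 -> kerT z (phi z)) &
        forall j, psi j = f j + projLinf 1 (sum_in phi) j].
Proof.
move=> hM /in_H_l2 [hV hl2]; have hbulk := M1inf_bulk hM.
pose N := 1 + (`|(1 - pprime p + p)%R|%N)%:Z.
have hD j : N <= j -> polyop (shifted_symbol_det p q a) psi j = 0.
  by move=> hj; apply: (bulk_det hbulk); lia.
have [N' [c [_ hdec]]] := l2_kernel_qpseq reg uzs roots (l2_mono _ hl2) hD.
pose phi z := qpseq z (mult z) (c z).
have hdec' j : N' <= j -> psi j = \sum_(z <- zin) phi z j by move=> hj; rewrite hdec // big_filter.
have hK z : z \in zs -> `|z| < 1 -> kerT z (phi z).
  move=> zzs hz; have zz : z \in zin by rewrite mem_filter hz zzs.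
  by split; [apply: qpseq_parts_in_kernel hbulk hdec' z zz | apply/in_T_qpseq; exists (c z)].
have hg := proj_kernel_bulk (sum_in_kernel hK).
exists (fun j => psi j - projLinf 1 (sum_in phi) j), phi; split=> // [|j]; last by rewrite subrK.
apply: (@F1minus_of_finite _ _ _ _ _ _ (`|N'|%N)) => [|j hj]; last first.
  by rewrite /projLinf ifT ?hdec' /sum_in ?big_filter ?subrr //; lia.
split=> [j hj|]; first by rewrite hV // /projLinf ifF ?subr0 //; lia.
apply: functional_extensionality => j; rewrite /projLinf; case: ifP => // hj.
by rewrite bblB hbulk // hg // subr0.
Qed.

Lemma decomposed_bulk_l2 (psi f : vseq C d) (phi : C -> vseq C d) :
  F1minus p q a f -> (forall z, z \in zs -> `|z| < 1 -> kerT z (phi z)) ->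
  (forall j, psi j = f j + projLinf 1 (sum_in phi) j) ->
  M1inf p q a psi /\ in_H psi.
Proof.
move=> hf hK /functional_extensionality ->; have [[hfV _] _] := hf.
have [k hk] := F1minus_finite hf.
have hV : in_V1inf (fun j => f j + projLinf 1 (sum_in phi) j).
  by move=> j hj; rewrite hfV // /projLinf ifF ?addr0 //; lia.
split.
  split=> //; apply: functional_extensionality => j; rewrite /projLinf; case: ifP => // hj.
  rewrite bblD (M1inf_bulk hf.1) // proj_kernel_bulk ?addr0 //.
  exact: sum_in_kernel.
apply/in_H_l2; split=> //; apply: l2_add; first by apply: (l2_finite (K := k)) => t ht; apply: hk; lia.
apply: (l2_ext (u := sum_in phi)) => [t ht|]; first by rewrite /projLinf ifT.
have [c [hc _]] := kerT_coefs hK.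
apply: l2_sum => z zzs hz; have zz : z \in zin by rewrite mem_filter hz zzs.
by rewrite hc //; apply: l2_qpseq; [apply: zin_nz | ].
Qed.

End HalfInfiniteBulkSolutions.

Unset Implicit Arguments.

Theorem mainTheorem18 (C : archiClosedFieldType) (d : nat) (p q : int)
    (a : int -> 'M[C]_d) (zs : seq C) :
  (0 < d)%N -> p <= q -> a p != 0 -> a q != 0 ->
  regular p q a ->
  uniq zs ->
  (forall z : C, z \in zs <-> nonzero_root_of_det p q a z) ->
  let K := fun (z : C) (psi : vseq C d) =>
             in_kerA p q a psi /\ in_T z (root_mult p q a z) psi in
  (* (1) inner directness *)
  (forall phi : C -> vseq C d,
     (forall z, z \in zs -> `|z| < 1 -> K z (phi z)) ->
     (forall j, \sum_(z <- zs | `|z| < 1) phi z j = 0) ->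
     forall z, z \in zs -> `|z| < 1 -> phi z = (fun _ => 0)) /\
  (* (2) outer directness *)
  (forall (f : vseq C d) (phi : C -> vseq C d),
     F1minus p q a f ->
     (forall z, z \in zs -> `|z| < 1 -> K z (phi z)) ->
     (forall j, f j + projLinf 1 (fun i => \sum_(z <- zs | `|z| < 1) phi z i) j = 0) ->
     f = (fun _ => 0) /\
     projLinf 1 (fun i => \sum_(z <- zs | `|z| < 1) phi z i) = (fun _ => 0)) /\
  (* (3) the decomposition *)
  (forall psi : vseq C d,
     (M1inf p q a psi /\ in_H psi) <->
     exists (f : vseq C d) (phi : C -> vseq C d),
       [/\ F1minus p q a f,
           (forall z, z \in zs -> `|z| < 1 -> K z (phi z)) &
           forall j, psi j = f j + projLinf 1 (fun i => \sum_(z <- zs | `|z| < 1) phi z i) j]).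
Proof.
move=> _ _ _ _ reg uzs roots K; split; [|split].
- by apply: kerT_sum_direct.
- by apply: F1minus_kerT_direct.
- move=> psi; split=> [[hM hH]|[f [phi [hf hK hpsi]]]].
  + by apply: bulk_l2_decompose.
  + by apply: decomposed_bulk_l2 hf hK hpsi.
Qed.
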